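(* Fix $E^2=\operatorname{diag}(\lambda_1,\lambda_2,\lambda_3)$ with $\lambda_i>0$ and $E^1=0$, and let $a=\frac{\partial E^3_{111}}{\partial E^1_1}$, $b=\frac{\partial E^3_{112}}{\partial E^1_2}$, $c=\frac{\partial E^3_{113}}{\partial E^1_3}$, $d=\frac{\partial E^3_{122}}{\partial E^1_1}$, all evaluated at $E^1=0$. Let $J_x\in\mathbb{R}^{9\times9}$ be the matrix whose only nonzero entries are $(J_x)_{1,2}=(J_x)_{2,5}=(J_x)_{3,6}=(J_x)_{4,7}=1$, $(J_x)_{5,2}=a$, $(J_x)_{6,3}=b$, $(J_x)_{7,4}=c$, $(J_x)_{8,2}=d$ (this is the Jacobian of the $x$-flux $f_x=(E^1_1,E^2_{11},E^2_{12},E^2_{13},E^3_{111},E^3_{112},E^3_{113},E^3_{122},E^3_{123})$ with respect to $E=(E^0,E^1_1,E^1_2,E^1_3,E^2_{11},E^2_{12},E^2_{13},E^2_{22},E^2_{23})$ at this state). Then $J_x$ is real diagonalizable if and only if $\sigma_1>0$, equivalently if and only if $3\lambda_1^2+\lambda_1(\lambda_2+\lambda_3)-\lambda_2\lambda_3>0$.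
   Context: With $R_i=e_i$ and $F_i=E^1_i$: for $x,y>0$, $g(x,y;a',b')=\dfrac{2(x-a'^2/x)(y-b'^2/y)(x-a'^2/x+y-b'^2/y)}{3(x+y)^2}$; for $\{i,j,k\}=\{1,2,3\}$, $\sigma_i=\lambda_i-g(\lambda_i,\lambda_j;F_i,F_j)-g(\lambda_i,\lambda_k;F_i,F_k)$, $w_i=\sigma_i+2g(\lambda_j,\lambda_k;F_j,F_k)$; $\sigma_1$ in the claim is evaluated at $E^1=0$. With $\tau_l=\dfrac{\sigma_l^2+2F_l^2-3w_l\sigma_l}{2F_l^2-w_l\sigma_l-w_l^2}$, the 3D $B_2$ third-order closure is $E^3_{lll}=F_l\tau_l$, $E^3_{ijk}=\frac{F_l}{2}(1-\tau_l)$ when $(i,j,k)$ is a permutation of $(l,m,m)$ with $m\ne l$, and $E^3_{123}=0$; the derivatives $a,b,c,d$ are taken with respect to $E^1$ with $E^0,E^2$ (hence $R_i=e_i$) fixed. *)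

From Stdlib Require Import Reals Lra Lia.
Open Scope R_scope.

Definition gfun (x y a' b' : R) : R :=
  2 * (x - a' ^ 2 / x) * (y - b' ^ 2 / y) * (x - a' ^ 2 / x + y - b' ^ 2 / y)
  / (3 * (x + y) ^ 2).

(* Indices 1,2,3. lam i = lambda_i, F i = F_i = E^1_i (R_i = e_i). *)
Definition oth1 (i : nat) : nat := if Nat.eqb i 1 then 2%nat else 1%nat.
Definition oth2 (i : nat) : nat := if Nat.eqb i 3 then 2%nat else 3%nat.

Definition sigmaB (lam F : nat -> R) (i : nat) : R :=
  let j := oth1 i in let k := oth2 i in
  lam i - gfun (lam i) (lam j) (F i) (F j) - gfun (lam i) (lam k) (F i) (F k).

Definition wfun (lam F : nat -> R) (i : nat) : R :=
  let j := oth1 i in let k := oth2 i in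
  sigmaB lam F i + 2 * gfun (lam j) (lam k) (F j) (F k).

Definition tau (lam F : nat -> R) (l : nat) : R :=
  let s := sigmaB lam F l in let w := wfun lam F l in
  (s ^ 2 + 2 * F l ^ 2 - 3 * w * s) / (2 * F l ^ 2 - w * s - w ^ 2).

Definition E3 (lam F : nat -> R) (i j k : nat) : R :=
  if andb (Nat.eqb i j) (Nat.eqb j k) then F i * tau lam F i
  else if andb (negb (Nat.eqb i j)) (andb (negb (Nat.eqb j k)) (negb (Nat.eqb i k)))
  then 0
  else
    let l := if Nat.eqb i j then k else if Nat.eqb i k then j else i in
    F l / 2 * (1 - tau lam F l).

Definition vec3 (x y z : R) : nat -> R :=
  fun n => match n with 1%nat => x | 2%nat => y | 3%nat => z | _ => 0 end.

(* 9x9 real matrices, indices 1..9 *)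
Definition mat := nat -> nat -> R.

Definition mmul (A B : mat) : mat :=
  fun i j => sum_f_R0 (fun k => A i (S k) * B (S k) j) 8.

Definition in9 (i : nat) : Prop := (1 <= i <= 9)%nat.

Definition real_diagonalizable (A : mat) : Prop :=
  exists P Q D : mat,
    (forall i j, in9 i -> in9 j ->
       mmul P Q i j = (if Nat.eqb i j then 1 else 0) /\
       mmul Q P i j = (if Nat.eqb i j then 1 else 0)) /\
    (forall i j, in9 i -> in9 j -> i <> j -> D i j = 0) /\
    (forall i j, in9 i -> in9 j -> A i j = mmul (mmul P D) Q i j).

Definition Jx (a b c d : R) : mat :=
  fun i j =>
    match i, j with
    | 1%nat, 2%nat => 1 | 2%nat, 5%nat => 1 | 3%nat, 6%nat => 1 | 4%nat, 7%nat => 1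
    | 5%nat, 2%nat => a | 6%nat, 3%nat => b | 7%nat, 4%nat => c | 8%nat, 2%nat => d
    | _, _ => 0
    end.

From Stdlib Require Import Reals Lra Lia.
From Coquelicot Require Import Coquelicot.
Open Scope R_scope.

(** At [E^1 = 0] every third moment [E^3_{ijk}] is [F_l] times a smooth function, so the
    four derivatives are values of [tau] at rest: [a = tau_1], [b = (1 - tau_2)/2],
    [c = (1 - tau_3)/2].  With [g = g(lambda_j, lambda_k; 0, 0) > 0] and [sigma_l + g > 0]
    one finds [tau_l = sigma_l (sigma_l + 3g) / ((sigma_l + g)(sigma_l + 2g))], so [tau_l] has
    the sign of [sigma_l] and [tau_l < 1]; hence [b, c > 0] and [a] has the sign of [sigma_1].
    On the other side, given [b, c > 0], [Jx] is diagonalizable iff [a > 0]: for [a <= 0] the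
    eigenvector [e_2] of [Jx^2] obstructs any real diagonalization, and for [a > 0] an explicit
    eigenbasis exists. *)

Lemma derivable_pt_lim_mul_id (f T : R -> R) a :
  (forall t, f t = t * T t) -> ex_derive T 0 -> derivable_pt_lim f 0 a -> a = T 0.
Proof.
intros Hf HT Ha.
apply is_derive_Reals, is_derive_unique in Ha; rewrite <- Ha.
apply is_derive_unique.
apply (is_derive_ext (fun t => t * T t)); [intro t; now rewrite Hf|].
auto_derive; [exact HT | ring].
Qed.

Lemma gfun_rest x y : 0 < x -> 0 < y -> gfun x y 0 0 = 2 * x * y / (3 * (x + y)).
Proof. intros; unfold gfun; field; lra. Qed.

Lemma ex_derive_gfun_axis x y : 0 < x -> 0 < y -> ex_derive (fun t => gfun x y t 0) 0.
Proof. intros; unfold gfun; auto_derive; repeat split; lra. Qed.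

Definition tau_of (s w f : R) : R :=
  (s ^ 2 + 2 * f ^ 2 - 3 * w * s) / (2 * f ^ 2 - w * s - w ^ 2).

Lemma ex_derive_tau_of (s w f : R -> R) x :
  ex_derive s x -> ex_derive w x -> ex_derive f x ->
  2 * f x ^ 2 - w x * s x - w x ^ 2 <> 0 ->
  ex_derive (fun t => tau_of (s t) (w t) (f t)) x.
Proof. intros; unfold tau_of; auto_derive; repeat split; auto. Qed.

(* [sigma_axis x y z t] and [tau_axis x y z t] are [sigma_l] and [tau_l] at [E^1 = t e_l],
   where [x = lambda_l] and [y, z] are the two other eigenvalues. *)
Definition sigma_axis (x y z t : R) : R := x - gfun x y t 0 - gfun x z t 0.

Definition tau_axis (x y z t : R) : R :=
  tau_of (sigma_axis x y z t) (sigma_axis x y z t + 2 * gfun y z 0 0) t.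

Section AxisAtRest.
Variables x y z : R.
Hypotheses (Hx : 0 < x) (Hy : 0 < y) (Hz : 0 < z).

Let s := sigma_axis x y z 0.
Let g := gfun y z 0 0.

Lemma gfun_rest_pos : 0 < g.
Proof. unfold g; rewrite gfun_rest by lra; apply Rdiv_lt_0_compat; nra. Qed.

Lemma sigma_axis_add_gfun_pos : 0 < s + g.
Proof.
unfold s, g, sigma_axis; rewrite !gfun_rest by lra.
replace (x - 2 * x * y / (3 * (x + y)) - 2 * x * z / (3 * (x + z)) + 2 * y * z / (3 * (y + z)))
  with ((3 * x^3 * (y + z) + x^2 * (y^2 + z^2) + x * y * z * (y + z) + 4 * x^2 * y * z
         + 2 * y^2 * z^2) / (3 * (x + y) * (x + z) * (y + z))) by (field; lra).
apply Rdiv_lt_0_compat.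
- assert (0 < 3 * x^3 * (y + z)) by (repeat apply Rmult_lt_0_compat; try apply pow_lt; lra).
  assert (0 < x^2 * (y^2 + z^2)) by (apply Rmult_lt_0_compat; nra).
  assert (0 < x * y * z * (y + z)) by (repeat apply Rmult_lt_0_compat; lra).
  assert (0 < x^2 * y * z) by (repeat apply Rmult_lt_0_compat; nra).
  assert (0 < y^2 * z^2) by (apply Rmult_lt_0_compat; nra).
  lra.
- repeat apply Rmult_lt_0_compat; lra.
Qed.

Lemma sigma_axis_pos_iff : 0 < s <-> 0 < 3 * x ^ 2 + x * (y + z) - y * z.
Proof.
unfold s, sigma_axis; rewrite !gfun_rest by lra.
replace (x - 2 * x * y / (3 * (x + y)) - 2 * x * z / (3 * (x + z)))
  with ((3 * x ^ 2 + x * (y + z) - y * z) * (x / (3 * (x + y) * (x + z)))) by (field; lra).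
assert (0 < x / (3 * (x + y) * (x + z))) by (apply Rdiv_lt_0_compat; nra).
split; intro; nra.
Qed.

Lemma tau_axis_rest : tau_axis x y z 0 = s * (s + 3 * g) / ((s + g) * (s + 2 * g)).
Proof.
pose proof gfun_rest_pos; pose proof sigma_axis_add_gfun_pos.
unfold tau_axis, tau_of; fold s g; field; repeat split; nra.
Qed.

Lemma ex_derive_tau_axis : ex_derive (tau_axis x y z) 0.
Proof.
pose proof gfun_rest_pos; pose proof sigma_axis_add_gfun_pos.
assert (Hs : ex_derive (sigma_axis x y z) 0).
{ unfold sigma_axis; auto_derive; repeat split; apply ex_derive_gfun_axis; lra. }
apply ex_derive_tau_of; auto using ex_derive_id.
- auto_derive; exact Hs.
- fold s g; nra.
Qed.

Lemma tau_axis_rest_pos_iff : 0 < tau_axis x y z 0 <-> 0 < s.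
Proof.
pose proof gfun_rest_pos; pose proof sigma_axis_add_gfun_pos.
rewrite tau_axis_rest.
assert (0 < (s + 3 * g) / ((s + g) * (s + 2 * g))) by (apply Rdiv_lt_0_compat; nra).
unfold Rdiv; rewrite Rmult_assoc; split; intro; nra.
Qed.

Lemma tau_axis_rest_lt_1 : tau_axis x y z 0 < 1.
Proof.
pose proof gfun_rest_pos; pose proof sigma_axis_add_gfun_pos.
rewrite tau_axis_rest.
apply Rlt_div_l; nra.
Qed.

End AxisAtRest.

Lemma E3_111_axis l1 l2 l3 t :
  E3 (vec3 l1 l2 l3) (vec3 t 0 0) 1%nat 1%nat 1%nat = t * tau_axis l1 l2 l3 t.
Proof. reflexivity. Qed.

Lemma E3_112_axis l1 l2 l3 t :
  E3 (vec3 l1 l2 l3) (vec3 0 t 0) 1%nat 1%nat 2%nat = t * ((1 - tau_axis l2 l1 l3 t) / 2).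
Proof.
change (tau_axis l2 l1 l3 t) with (tau (vec3 l1 l2 l3) (vec3 0 t 0) 2%nat).
cbv [E3 vec3 Nat.eqb andb negb]; field.
Qed.

Lemma E3_113_axis l1 l2 l3 t :
  E3 (vec3 l1 l2 l3) (vec3 0 0 t) 1%nat 1%nat 3%nat = t * ((1 - tau_axis l3 l1 l2 t) / 2).
Proof.
change (tau_axis l3 l1 l2 t) with (tau (vec3 l1 l2 l3) (vec3 0 0 t) 3%nat).
cbv [E3 vec3 Nat.eqb andb negb]; field.
Qed.

Lemma ex_derive_half_one_sub (T : R -> R) : ex_derive T 0 -> ex_derive (fun t => (1 - T t) / 2) 0.
Proof. intros; auto_derive; auto. Qed.

Definition idm : mat := fun i j => if Nat.eqb i j then 1 else 0.

Definition is_diag (D : mat) : Prop :=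
  forall i j, in9 i -> in9 j -> i <> j -> D i j = 0.

Ltac case9 i Hi :=
  destruct i as [|[|[|[|[|[|[|[|[|[|i]]]]]]]]]]; try (exfalso; unfold in9 in Hi; lia).

Lemma mmul_assoc A B C i j : mmul (mmul A B) C i j = mmul A (mmul B C) i j.
Proof. unfold mmul; simpl; ring. Qed.

Lemma mmul_ext_l A A' B i j :
  (forall k, in9 k -> A i k = A' i k) -> mmul A B i j = mmul A' B i j.
Proof. intros H; unfold mmul; simpl; rewrite !H by (unfold in9; lia); reflexivity. Qed.

Lemma mmul_ext_r A B B' i j :
  (forall k, in9 k -> B k j = B' k j) -> mmul A B i j = mmul A B' i j.
Proof. intros H; unfold mmul; simpl; rewrite !H by (unfold in9; lia); reflexivity. Qed.

Lemma mmul1m B i j : in9 i -> mmul idm B i j = B i j.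
Proof. intros Hi; case9 i Hi; unfold mmul, idm; simpl; ring. Qed.

Lemma mmul_diag_l D B i j : is_diag D -> in9 i -> mmul D B i j = D i i * B i j.
Proof.
intros HD Hi.
rewrite (mmul_ext_l D (fun i j => if Nat.eqb i j then D i i else 0)).
- case9 i Hi; unfold mmul; simpl; ring.
- intros k Hk; destruct (Nat.eqb_spec i k); [now subst | apply HD; auto].
Qed.

Lemma mmul_diag_r A D i j : is_diag D -> in9 j -> mmul A D i j = A i j * D j j.
Proof.
intros HD Hj.
rewrite (mmul_ext_r A D (fun i j => if Nat.eqb i j then D j j else 0)).
- case9 j Hj; unfold mmul; simpl; ring.
- intros k Hk; destruct (Nat.eqb_spec k j); [now subst | apply HD; auto].
Qed.

Section Diagonalization.
Variables A P Q D : mat.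
Hypothesis HQP : forall i j, in9 i -> in9 j -> mmul Q P i j = idm i j.
Hypothesis HD : is_diag D.
Hypothesis HA : forall i j, in9 i -> in9 j -> A i j = mmul (mmul P D) Q i j.

Lemma mmul_diagonalizer_l i j : in9 i -> in9 j -> mmul Q A i j = D i i * Q i j.
Proof.
intros Hi Hj.
rewrite (mmul_ext_r Q A (mmul (mmul P D) Q)) by auto.
rewrite <- mmul_assoc.
rewrite (mmul_ext_l _ D); [now apply mmul_diag_l|].
intros k Hk.
rewrite <- mmul_assoc, (mmul_ext_l _ idm) by auto.
now apply mmul1m.
Qed.

(* If [A^2 e_j = a e_j] with [a <= 0], then every eigenvalue [D k k] has
   [(D k k * Q k j)^2 = a (Q k j)^2 <= 0], so [D Q e_j = 0] and [A e_j = P D Q e_j = 0]. *)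
Lemma diagonalizable_sq_eigvec_nonpos j a :
  in9 j -> a <= 0 ->
  (forall i, in9 i -> mmul A A i j = a * idm i j) ->
  forall i, in9 i -> A i j = 0.
Proof.
intros Hj Ha HAA i Hi.
assert (HDQ : forall k, in9 k -> D k k * Q k j = 0).
{ intros k Hk.
  assert (Hsq : D k k * (D k k * Q k j) = a * Q k j).
  { transitivity (mmul Q (mmul A A) k j).
    - rewrite <- mmul_assoc.
      rewrite (mmul_ext_l _ (fun _ m => D k k * Q k m)) by (intros; now apply mmul_diagonalizer_l).
      transitivity (D k k * mmul Q A k j); [now rewrite mmul_diagonalizer_l|].
      unfold mmul; simpl; ring.
    - rewrite (mmul_ext_r _ _ (fun i j => a * idm i j)) by auto.
      case9 j Hj; unfold mmul, idm; simpl; ring. }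
  assert (Hsq' : (D k k * Q k j) * (D k k * Q k j) = a * (Q k j * Q k j)).
  { transitivity (Q k j * (D k k * (D k k * Q k j))); [ring | rewrite Hsq; ring]. }
  assert (0 <= Q k j * Q k j) by nra.
  nra. }
rewrite HA by auto.
rewrite (mmul_ext_l _ (fun i m => P i m * D m m)) by (intros; now apply mmul_diag_r).
transitivity (mmul P (fun m j => D m m * Q m j) i j); [unfold mmul; simpl; ring|].
rewrite (mmul_ext_r _ _ (fun _ _ => 0)) by auto.
unfold mmul; simpl; ring.
Qed.

End Diagonalization.

Lemma Jx_sq_col2 a b c d i : in9 i -> mmul (Jx a b c d) (Jx a b c d) i 2%nat = a * idm i 2%nat.
Proof. intros Hi; case9 i Hi; unfold mmul, Jx, idm; simpl; ring. Qed.

Lemma Jx_not_diagonalizable a b c d : a <= 0 -> ~ real_diagonalizable (Jx a b c d).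
Proof.
intros Ha [P [Q [D [HPQ [HD HA]]]]].
assert (H12 : Jx a b c d 1%nat 2%nat = 0).
{ apply (diagonalizable_sq_eigvec_nonpos (Jx a b c d) P Q D) with (a := a);
    try (unfold in9; lia); auto.
  - intros; now apply HPQ.
  - apply Jx_sq_col2. }
simpl in H12; lra.
Qed.

(* Columns of [P] are eigenvectors of [Jx (al^2) (be^2) (ga^2) d]: the pairs of columns
   2, 5 / 3, 6 / 4, 7 belong to the eigenvalues [+-al], [+-be], [+-ga] of the
   2x2 blocks on (E^1_i, E^2_1i), and columns 1, 8, 9 span the kernel. *)
Definition Jx_eigvecs (al be ga d : R) : mat := fun i j =>
  match i, j with
  | 1%nat, 1%nat => 1 | 1%nat, 2%nat => 1/al | 2%nat, 2%nat => 1 | 5%nat, 2%nat => al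
  | 8%nat, 2%nat => d/al
  | 3%nat, 3%nat => 1 | 6%nat, 3%nat => be | 4%nat, 4%nat => 1 | 7%nat, 4%nat => ga
  | 1%nat, 5%nat => -1/al | 2%nat, 5%nat => 1 | 5%nat, 5%nat => -al | 8%nat, 5%nat => -d/al
  | 3%nat, 6%nat => 1 | 6%nat, 6%nat => -be | 4%nat, 7%nat => 1 | 7%nat, 7%nat => -ga
  | 8%nat, 8%nat => 1 | 9%nat, 9%nat => 1
  | _, _ => 0 end.

Definition Jx_eigvecs_inv (al be ga d : R) : mat := fun i j =>
  match i, j with
  | 1%nat, 1%nat => 1 | 1%nat, 5%nat => -1/(al*al)
  | 2%nat, 2%nat => 1/2 | 2%nat, 5%nat => 1/(2*al)
  | 3%nat, 3%nat => 1/2 | 3%nat, 6%nat => 1/(2*be)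
  | 4%nat, 4%nat => 1/2 | 4%nat, 7%nat => 1/(2*ga)
  | 5%nat, 2%nat => 1/2 | 5%nat, 5%nat => -1/(2*al)
  | 6%nat, 3%nat => 1/2 | 6%nat, 6%nat => -1/(2*be)
  | 7%nat, 4%nat => 1/2 | 7%nat, 7%nat => -1/(2*ga)
  | 8%nat, 8%nat => 1 | 8%nat, 5%nat => -d/(al*al)
  | 9%nat, 9%nat => 1
  | _, _ => 0 end.

Definition Jx_eigvals (al be ga : R) : mat := fun i j =>
  if Nat.eqb i j then
    match i with
    | 2%nat => al | 3%nat => be | 4%nat => ga | 5%nat => -al | 6%nat => -be | 7%nat => -ga
    | _ => 0 end
  else 0.

Lemma Jx_sq_diagonalizable al be ga d : al <> 0 -> be <> 0 -> ga <> 0 ->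
  real_diagonalizable (Jx (al * al) (be * be) (ga * ga) d).
Proof.
intros. exists (Jx_eigvecs al be ga d), (Jx_eigvecs_inv al be ga d), (Jx_eigvals al be ga).
split; [|split].
- intros i j Hi Hj. case9 i Hi; case9 j Hj;
    unfold mmul, Jx_eigvecs, Jx_eigvecs_inv; simpl; split; field; auto.
- intros i j Hi Hj Hij. unfold Jx_eigvals. destruct (Nat.eqb_spec i j); [contradiction | reflexivity].
- intros i j Hi Hj. case9 i Hi; case9 j Hj;
    unfold mmul, Jx_eigvecs, Jx_eigvecs_inv, Jx_eigvals, Jx; simpl; field; auto.
Qed.

Lemma Jx_diagonalizable_iff a b c d : 0 < b -> 0 < c ->
  real_diagonalizable (Jx a b c d) <-> 0 < a.
Proof.
intros Hb Hc; split; intro H.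
- destruct (Rlt_or_le 0 a) as [|Ha]; [assumption|].
  now destruct (Jx_not_diagonalizable a b c d Ha).
- rewrite <- (sqrt_sqrt a), <- (sqrt_sqrt b), <- (sqrt_sqrt c) by lra.
  apply Jx_sq_diagonalizable; apply Rgt_not_eq, sqrt_lt_R0; assumption.
Qed.

Theorem mainTheorem13 (l1 l2 l3 a b c d : R) :
  0 < l1 -> 0 < l2 -> 0 < l3 ->
  derivable_pt_lim (fun t => E3 (vec3 l1 l2 l3) (vec3 t 0 0) 1%nat 1%nat 1%nat) 0 a ->
  derivable_pt_lim (fun t => E3 (vec3 l1 l2 l3) (vec3 0 t 0) 1%nat 1%nat 2%nat) 0 b ->
  derivable_pt_lim (fun t => E3 (vec3 l1 l2 l3) (vec3 0 0 t) 1%nat 1%nat 3%nat) 0 c ->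
  derivable_pt_lim (fun t => E3 (vec3 l1 l2 l3) (vec3 t 0 0) 1%nat 2%nat 2%nat) 0 d ->
  (real_diagonalizable (Jx a b c d) <-> 0 < sigmaB (vec3 l1 l2 l3) (vec3 0 0 0) 1%nat) /\
  (0 < sigmaB (vec3 l1 l2 l3) (vec3 0 0 0) 1%nat <->
     0 < 3 * l1 ^ 2 + l1 * (l2 + l3) - l2 * l3).
Proof.
intros H1 H2 H3 Ha Hb Hc _.
apply (derivable_pt_lim_mul_id _ (tau_axis l1 l2 l3)) in Ha;
  [| apply E3_111_axis | now apply ex_derive_tau_axis].
apply (derivable_pt_lim_mul_id _ (fun t => (1 - tau_axis l2 l1 l3 t) / 2)) in Hb;
  [| apply E3_112_axis | now apply ex_derive_half_one_sub, ex_derive_tau_axis].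
apply (derivable_pt_lim_mul_id _ (fun t => (1 - tau_axis l3 l1 l2 t) / 2)) in Hc;
  [| apply E3_113_axis | now apply ex_derive_half_one_sub, ex_derive_tau_axis].
assert (Pb : 0 < b) by (pose proof (tau_axis_rest_lt_1 l2 l1 l3 H2 H1 H3); lra).
assert (Pc : 0 < c) by (pose proof (tau_axis_rest_lt_1 l3 l1 l2 H3 H1 H2); lra).
change (sigmaB (vec3 l1 l2 l3) (vec3 0 0 0) 1%nat) with (sigma_axis l1 l2 l3 0).
split; [| now apply sigma_axis_pos_iff].
rewrite Jx_diagonalizable_iff, Ha by assumption.
now apply tau_axis_rest_pos_iff.
Qed.
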